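(* Let $G$ be a discrete (not necessarily countable) amenable ICC group, and let $X$ be a finite symmetric subset of $G$. Then the set of super-switching elements for $X$ is infinite.
   Context: A group has the infinite conjugacy class property (ICC) if it is non-trivial and every non-identity element has an infinite conjugacy class. A subset $X\subseteq G$ is symmetric if $X=X^{-1}$. An element $g\in G$ is a super-switching element for $X$ if $X\cap\big(gXg\cup gXg^{-1}\cup g^{-1}Xg\cup g^{-1}Xg^{-1}\big)\subseteq\{e\}$. *)

From Stdlib Require Import Reals List.
Open Scope R_scope.

Record is_group {G : Type} (mul : G -> G -> G) (e : G) (inv : G -> G) : Prop := {
  grp_assoc : forall x y z, mul x (mul y z) = mul (mul x y) z;
  grp_id_l  : forall x, mul e x = x;
  grp_id_r  : forall x, mul x e = x;
  grp_inv_l : forall x, mul (inv x) x = e;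
  grp_inv_r : forall x, mul x (inv x) = e
}.

Definition finite_set {G : Type} (A : G -> Prop) : Prop :=
  exists l : list G, forall x, A x -> In x l.

Definition infinite_set {G : Type} (A : G -> Prop) : Prop := ~ finite_set A.

Definition conj_class {G : Type} (mul : G -> G -> G) (inv : G -> G) (g : G)
  : G -> Prop := fun y => exists h, y = mul (mul h g) (inv h).

Definition ICC {G : Type} (mul : G -> G -> G) (e : G) (inv : G -> G) : Prop :=
  (exists g : G, g <> e) /\
  forall g : G, g <> e -> infinite_set (conj_class mul inv g).

Definition amenable {G : Type} (mul : G -> G -> G) (inv : G -> G) : Prop :=
  exists m : (G -> Prop) -> R,
    (forall A, 0 <= m A) /\
    m (fun _ => True) = 1 /\
    (forall A B : G -> Prop, (forall x, A x -> B x -> False) ->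
        m (fun x => A x \/ B x) = m A + m B) /\
    (forall (g : G) (A : G -> Prop), m (fun x => A (mul (inv g) x)) = m A).

Definition symmetric_set {G : Type} (inv : G -> G) (X : G -> Prop) : Prop :=
  forall x, X x <-> X (inv x).

(* g is super-switching for X:
   X ∩ (gXg ∪ gXg⁻¹ ∪ g⁻¹Xg ∪ g⁻¹Xg⁻¹) ⊆ {e}. *)
Definition super_switching {G : Type} (mul : G -> G -> G) (e : G) (inv : G -> G)
  (X : G -> Prop) (g : G) : Prop :=
  forall y : G, X y ->
    (exists x, X x /\
      (y = mul (mul g x) g \/ y = mul (mul g x) (inv g) \/
       y = mul (mul (inv g) x) g \/ y = mul (mul (inv g) x) (inv g))) ->
    y = e.

(* Fix a left-invariant finitely additive probability measure m on G.  A set A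
   is null as soon as every finite family of translates of A can be extended by
   a translate meeting each of them in a null set, since n such translates have
   total measure n m(A) <= 1.  The translates of {g | g u g^-1 = v} are the
   fibres over the conjugates of v, infinitely many by ICC when v <> e, so these
   fibres are null; from this, {g | g a g = b} is null for all a, b, and so is
   every finite set.  Now g fails to be super-switching for X only if
   y \in {gxg, gxg^-1, g^-1xg, g^-1xg^-1} for some x, y in X with y <> e, which
   puts g in one of finitely many null sets; were the super-switching elements
   also finitely many, G itself would be null. *)
From Stdlib Require Import Reals List Lra Classical FunctionalExtensionality PropExtensionality.
Open Scope R_scope.

Lemma nonneg_bounded_multiples_eq0 (r : R) :
  0 <= r -> (forall n, INR n * r <= 1) -> r = 0.
Proof.
  intros r_ge0 bounded.
  destruct (Req_dec r 0) as [| r_neq0]; [assumption | exfalso].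
  assert (r_gt0 : 0 < r) by lra.
  destruct (archimed_cor1 r r_gt0) as [N [invN_lt_r N_gt0]].
  assert (INR_N_gt0 : 0 < INR N) by (apply lt_0_INR; exact N_gt0).
  assert (INR N * / INR N < INR N * r) by (apply Rmult_lt_compat_l; assumption).
  rewrite Rinv_r in * by lra.
  specialize (bounded N). lra.
Qed.

Lemma infinite_set_not_in_list {T : Type} {A : T -> Prop} (l : list T) :
  infinite_set A -> exists x, A x /\ ~ In x l.
Proof.
  intros A_inf. apply NNPP. intros no_fresh. apply A_inf. exists l.
  intros x Ax. apply NNPP. intros x_notin. apply no_fresh. exists x. tauto.
Qed.

Lemma exists_In_cons {I : Type} (i : I) (l : list I) (P : I -> Prop) :
  (exists j, In j (i :: l) /\ P j) <-> P i \/ exists j, In j l /\ P j.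
Proof.
  split.
  - intros [j [[<- | j_in] Pj]]; [left | right; exists j]; auto.
  - intros [Pi | [j [j_in Pj]]]; [exists i | exists j]; simpl; auto.
Qed.

Section FinitelyAdditive.

Context {T : Type} {m : (T -> Prop) -> R}.
Hypothesis m_nonneg : forall A, 0 <= m A.
Hypothesis m_add : forall A B : T -> Prop, (forall x, A x -> B x -> False) ->
  m (fun x => A x \/ B x) = m A + m B.

Lemma m_ext (A B : T -> Prop) : (forall x, A x <-> B x) -> m A = m B.
Proof.
  intros AB. f_equal. apply functional_extensionality. intros x.
  apply propositional_extensionality. apply AB.
Qed.

Lemma m_empty : m (fun _ => False) = 0.
Proof.
  pose proof (m_add (fun _ => False) (fun _ => False) (fun _ f _ => f)) as add0.
  rewrite (m_ext _ (fun _ => False)) in add0 by tauto. lra.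
Qed.

Lemma m_union (A B : T -> Prop) :
  m (fun x => A x \/ B x) = m A + m B - m (fun x => A x /\ B x).
Proof.
  assert (AuB := m_add A (fun x => B x /\ ~ A x) ltac:(firstorder)).
  assert (B_split := m_add (fun x => B x /\ ~ A x) (fun x => A x /\ B x) ltac:(firstorder)).
  rewrite (m_ext _ (fun x => A x \/ B x)) in AuB
    by (intros x; destruct (classic (A x)); tauto).
  rewrite (m_ext _ B) in B_split by (intros x; destruct (classic (A x)); tauto).
  lra.
Qed.

Lemma m_mono (A B : T -> Prop) : (forall x, A x -> B x) -> m A <= m B.
Proof.
  intros AB. assert (B_split := m_add A (fun x => B x /\ ~ A x) ltac:(firstorder)).
  rewrite (m_ext _ B) in B_split
    by (intros x; specialize (AB x); destruct (classic (A x)); tauto).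
  pose proof (m_nonneg (fun x => B x /\ ~ A x)). lra.
Qed.

Lemma null_subset (A B : T -> Prop) :
  (forall x, A x -> B x) -> m B = 0 -> m A = 0.
Proof.
  intros AB B0. pose proof (m_mono A B AB). pose proof (m_nonneg A). lra.
Qed.

Lemma null_empty (A : T -> Prop) : (forall x, ~ A x) -> m A = 0.
Proof. intros A_empty. rewrite <- m_empty. apply m_ext. firstorder. Qed.

Lemma null_union (A B : T -> Prop) :
  m A = 0 -> m B = 0 -> m (fun x => A x \/ B x) = 0.
Proof.
  intros A0 B0. rewrite m_union, A0, B0.
  pose proof (m_nonneg (fun x => A x /\ B x)).
  pose proof (m_mono (fun x => A x /\ B x) A (fun x H => proj1 H)). lra.
Qed.

Lemma null_list_union {I : Type} (l : list I) (P : I -> T -> Prop) :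
  (forall i, In i l -> m (P i) = 0) -> m (fun x => exists i, In i l /\ P i x) = 0.
Proof.
  induction l as [| i l IH]; intros P_null.
  - apply null_empty. intros x [? [[] _]].
  - rewrite (m_ext _ (fun x => P i x \/ exists j, In j l /\ P j x))
      by (intros x; apply (exists_In_cons i l (fun j => P j x))).
    apply null_union; [apply P_null; left; reflexivity |].
    apply IH. intros j j_in. apply P_null. right. exact j_in.
Qed.

End FinitelyAdditive.

Section Group.

Variables (G : Type) (mul : G -> G -> G) (e : G) (inv : G -> G).
Hypothesis Hgrp : is_group mul e inv.

Let mulgA := grp_assoc _ _ _ Hgrp.
Let mul1g := grp_id_l _ _ _ Hgrp.
Let mulg1 := grp_id_r _ _ _ Hgrp.
Let mulVg := grp_inv_l _ _ _ Hgrp.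
Let mulgV := grp_inv_r _ _ _ Hgrp.

Lemma mulKg (a x : G) : mul (inv a) (mul a x) = x.
Proof. rewrite mulgA, mulVg, mul1g. reflexivity. Qed.

Lemma mulKVg (a x : G) : mul a (mul (inv a) x) = x.
Proof. rewrite mulgA, mulgV, mul1g. reflexivity. Qed.

Lemma mulg_injl (a x y : G) : mul a x = mul a y -> x = y.
Proof. intros E. rewrite <- (mulKg a x), <- (mulKg a y), E. reflexivity. Qed.

Lemma inv_unique (a b : G) : mul a b = e -> b = inv a.
Proof. intros E. apply (mulg_injl a). rewrite E, mulgV. reflexivity. Qed.

Lemma invg1 : inv e = e.
Proof. symmetry. apply inv_unique, mul1g. Qed.

Lemma invgK (a : G) : inv (inv a) = a.
Proof. symmetry. apply inv_unique, mulVg. Qed.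

Lemma invMg (a b : G) : inv (mul a b) = mul (inv b) (inv a).
Proof. symmetry. apply inv_unique. rewrite <- mulgA, mulKVg. apply mulgV. Qed.

Definition conjg (a u : G) : G := mul (mul a u) (inv a).

Lemma conjg1 (a : G) : conjg a e = e.
Proof. unfold conjg. rewrite mulg1. apply mulgV. Qed.

Lemma conjgM (a b u : G) : conjg (mul a b) u = conjg a (conjg b u).
Proof. unfold conjg. rewrite invMg, <- !mulgA. reflexivity. Qed.

Lemma conjgK (a u : G) : conjg (inv a) (conjg a u) = u.
Proof. rewrite <- conjgM, mulVg. unfold conjg. rewrite invg1, mul1g. apply mulg1. Qed.

Lemma conjgKV (a u : G) : conjg a (conjg (inv a) u) = u.
Proof. rewrite <- (invgK a) at 1. apply conjgK. Qed.

Definition translate (h : G) (A : G -> Prop) : G -> Prop := fun x => A (mul (inv h) x).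

Lemma translate_conj_fiber (h u v x : G) :
  translate h (fun g => conjg g u = v) x <-> conjg x u = conjg h v.
Proof.
  unfold translate. rewrite conjgM.
  split; intros E; [rewrite <- E, conjgKV | rewrite E, conjgK]; reflexivity.
Qed.

Definition switch_image (g x y : G) : Prop :=
  y = mul (mul g x) g \/ y = mul (mul g x) (inv g) \/
  y = mul (mul (inv g) x) g \/ y = mul (mul (inv g) x) (inv g).

Section InvariantMeasure.

Variable m : (G -> Prop) -> R.
Hypothesis m_nonneg : forall A, 0 <= m A.
Hypothesis m_total : m (fun _ => True) = 1.
Hypothesis m_add : forall A B : G -> Prop, (forall x, A x -> B x -> False) ->
  m (fun x => A x \/ B x) = m A + m B.
Hypothesis m_translate : forall h A, m (translate h A) = m A.

Let m_ext := @m_ext G m.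
Let m_mono := m_mono m_nonneg m_add.
Let m_union := m_union m_add.
Let null_empty := null_empty m_add.
Let null_subset := null_subset m_nonneg m_add.
Let null_union := null_union m_nonneg m_add.
Let null_list_union := @null_list_union G m m_nonneg m_add.

Lemma m_lmul_preimage (t : G) (A : G -> Prop) : m (fun g => A (mul t g)) = m A.
Proof.
  rewrite <- (m_translate (inv t) A). apply m_ext.
  intros g. unfold translate. rewrite invgK. reflexivity.
Qed.

Lemma null_of_almost_disjoint_translates (A : G -> Prop) :
  (forall l : list G, exists h, forall h', In h' l ->
     m (fun x => translate h A x /\ translate h' A x) = 0) ->
  m A = 0.
Proof.
  intros fresh.
  assert (packing : forall n, exists l,
    m (fun x => exists h, In h l /\ translate h A x) = INR n * m A).
  { induction n as [| n [l IH]].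
    - exists nil. rewrite Rmult_0_l. apply null_empty. intros x [? [[] _]].
    - destruct (fresh l) as [h h_fresh]. exists (h :: l).
      rewrite (m_ext _ (fun x => translate h A x \/ exists h', In h' l /\ translate h' A x))
        by (intros x; apply (exists_In_cons h l (fun h' => translate h' A x))).
      rewrite m_union, IH, m_translate, S_INR.
      rewrite (null_subset
        (fun x => translate h A x /\ exists h', In h' l /\ translate h' A x)
        (fun x => exists h', In h' l /\ (translate h A x /\ translate h' A x))).
      + ring.
      + intros x [Ahx [h' [h'_in Ah'x]]]. exists h'. auto.
      + apply null_list_union. exact h_fresh. }
  apply nonneg_bounded_multiples_eq0; [apply m_nonneg |].
  intros n. destruct (packing n) as [l <-]. rewrite <- m_total. apply m_mono. tauto.
Qed.

Section InfiniteConjugacyClasses.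

Hypothesis G_nontrivial : exists g : G, g <> e.
Hypothesis conj_class_infinite :
  forall g : G, g <> e -> infinite_set (conj_class mul inv g).

Lemma exists_not_in_list (l : list G) : exists h, ~ In h l.
Proof.
  destruct G_nontrivial as [g g_ne].
  destruct (infinite_set_not_in_list l (conj_class_infinite g g_ne)) as [h [_ h_notin]].
  exists h. exact h_notin.
Qed.

Lemma exists_fresh_conjugate (v : G) (l : list G) :
  v <> e -> exists h, forall h', In h' l -> conjg h v <> conjg h' v.
Proof.
  intros v_ne.
  destruct (infinite_set_not_in_list (map (fun h' => conjg h' v) l)
              (conj_class_infinite v v_ne)) as [y [[h ->] y_notin]].
  exists h. intros h' h'_in E. apply y_notin.
  change (In (conjg h v) (map (fun k => conjg k v) l)).
  rewrite E. apply (in_map (fun k => conjg k v)). exact h'_in.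
Qed.

Lemma conj_fiber_null (u v : G) : v <> e -> m (fun g => conjg g u = v) = 0.
Proof.
  intros v_ne. apply null_of_almost_disjoint_translates. intros l.
  destruct (exists_fresh_conjugate v l v_ne) as [h h_fresh]. exists h.
  intros h' h'_in. apply null_empty. intros x [Ex Ex'].
  rewrite translate_conj_fiber in Ex, Ex'.
  apply (h_fresh h' h'_in). congruence.
Qed.

Lemma conj_fiber_null_l (u v : G) : u <> e -> m (fun g => conjg g u = v) = 0.
Proof.
  intros u_ne. destruct (classic (v = e)) as [-> | v_ne].
  - apply null_empty. intros g E. apply u_ne. rewrite <- (conjgK g u), E. apply conjg1.
  - apply conj_fiber_null. exact v_ne.
Qed.

Lemma involutions_null : m (fun a => mul a a = e) = 0.
Proof.
  apply null_of_almost_disjoint_translates. intros l.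
  destruct (exists_not_in_list l) as [h h_notin]. exists h. intros h' h'_in.
  set (t := mul (inv h') h).
  assert (invt_ne : inv t <> e).
  { intros E. apply h_notin.
    assert (t_e : t = e) by (rewrite <- (invgK t), E; exact invg1).
    apply inv_unique in t_e. rewrite invgK in t_e. rewrite t_e. exact h'_in. }
  (* If a and t a are both involutions, then a t a^-1 = t^-1. *)
  apply (null_subset _ (translate h (fun a => conjg a t = inv t))).
  - intros x [sq sq']. unfold translate in *. set (a := mul (inv h) x) in *.
    assert (x_by_h' : mul (inv h') x = mul t a)
      by (unfold t, a; rewrite <- mulgA, mulKVg; reflexivity).
    rewrite x_by_h' in sq'.
    assert (inva : inv a = a) by (symmetry; apply inv_unique; exact sq).
    unfold conjg. rewrite inva. apply inv_unique.
    rewrite <- !mulgA. rewrite <- !mulgA in sq'. exact sq'.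
  - rewrite m_translate. apply conj_fiber_null. exact invt_ne.
Qed.

Lemma square_fiber_null (z : G) : m (fun a => mul a a = z) = 0.
Proof.
  destruct (classic (z = e)) as [-> | z_ne]; [exact involutions_null |].
  apply (null_subset _ (fun a => conjg a z = z)); [| apply conj_fiber_null; exact z_ne].
  intros a <-. unfold conjg. rewrite <- !mulgA, mulgV, mulg1. reflexivity.
Qed.

Lemma twisted_square_fiber_null (a b : G) : m (fun g => mul (mul g a) g = b) = 0.
Proof.
  apply (null_subset _ (fun g => mul (mul a g) (mul a g) = mul a b)).
  - intros g <-. rewrite <- !mulgA. reflexivity.
  - rewrite (m_lmul_preimage a (fun k => mul k k = mul a b)). apply square_fiber_null.
Qed.

Lemma finite_set_null (A : G -> Prop) : finite_set A -> m A = 0.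
Proof.
  intros [l A_in].
  apply (null_subset _ (fun g => exists a, In a l /\ mul g g = mul a a)).
  - intros g Ag. exists g. auto.
  - apply null_list_union. intros a _. apply square_fiber_null.
Qed.

Lemma switch_image_null (x y : G) : y <> e -> m (fun g => switch_image g x y) = 0.
Proof.
  intros y_ne.
  apply (null_subset _ (fun g => (mul (mul g x) g = y \/ conjg g x = y) \/
                                 (conjg g y = x \/ mul (mul g y) g = x))).
  - unfold conjg. intros g [E | [E | [E | E]]]; subst y.
    + left; left; reflexivity.
    + left; right; reflexivity.
    + right; left. rewrite <- !mulgA, mulKVg, mulgV, mulg1. reflexivity.
    + right; right. rewrite <- !mulgA, mulKVg, mulVg, mulg1. reflexivity.
  - repeat apply null_union.
    + apply twisted_square_fiber_null.
    + apply conj_fiber_null. exact y_ne.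
    + apply conj_fiber_null_l. exact y_ne.
    + apply twisted_square_fiber_null.
Qed.

Lemma not_super_switching_null (X : G -> Prop) :
  finite_set X -> m (fun g => ~ super_switching mul e inv X g) = 0.
Proof.
  intros [lX X_in].
  apply (null_subset _ (fun g => exists x, In x lX /\ exists y, In y lX /\
                                   y <> e /\ switch_image g x y)).
  - intros g not_ss.
    destruct (not_all_ex_not _ _ not_ss) as [y not_y].
    apply imply_to_and in not_y as [Xy not_y].
    apply imply_to_and in not_y as [[x [Xx img]] y_ne].
    exists x. split; [apply X_in; exact Xx |].
    exists y. split; [apply X_in; exact Xy |]. split; assumption.
  - apply null_list_union. intros x _. apply null_list_union. intros y _.
    destruct (classic (y = e)) as [y_e | y_ne].
    + apply null_empty. intros g [y_ne _]. exact (y_ne y_e).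
    + apply (null_subset _ (fun g => switch_image g x y)); [tauto |].
      apply switch_image_null. exact y_ne.
Qed.

Lemma super_switching_infinite (X : G -> Prop) :
  finite_set X -> infinite_set (super_switching mul e inv X).
Proof.
  intros X_fin ss_fin.
  assert (total_null : m (fun _ => True) = 0).
  { apply (null_subset _ (fun g => super_switching mul e inv X g \/
                                   ~ super_switching mul e inv X g)).
    - intros g _. apply classic.
    - apply null_union.
      + apply finite_set_null. exact ss_fin.
      + apply not_super_switching_null. exact X_fin. }
  lra.
Qed.

End InfiniteConjugacyClasses.

End InvariantMeasure.

End Group.

Theorem proposition2p4 (G : Type) (mul : G -> G -> G) (e : G) (inv : G -> G)
  (Hgrp : is_group mul e inv)
  (Hamen : amenable mul inv)
  (Hicc : ICC mul e inv)
  (X : G -> Prop) (HXfin : finite_set X) (HXsym : symmetric_set inv X) :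
  infinite_set (super_switching mul e inv X).
Proof.
  destruct Hamen as [m [m_nonneg [m_total [m_add m_translate]]]].
  destruct Hicc as [G_nontrivial conj_class_infinite].
  exact (super_switching_infinite G mul e inv Hgrp m m_nonneg m_total m_add m_translate
           G_nontrivial conj_class_infinite X HXfin).
Qed.
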